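(* Consider the setting described in the context, and suppose that $f^*$ is $L$-Lipschitz relative to $\mathcal{E}$. Let $\hat e=\mathcal{A}_m(\ell^{\mathrm{cg}},P_{S,W},\mathcal{E})$ and $\hat f=\mathcal{A}_n(\ell^{\mathrm{fg}},\hat P_{Z,Y},\mathcal{F})$. Then the excess risk satisfies $$\mathbb{E}_{P_{X,Y}}\left[\ell^{\mathrm{fg}}(\hat f\circ\hat e(X),Y)-\ell^{\mathrm{fg}}(f^*\circ e^*(X),Y)\right]\le 2L\,\mathrm{Rate}_m(\ell^{\mathrm{cg}},P_{S,W},\mathcal{E})+\mathrm{Rate}_n(\ell^{\mathrm{fg}},\hat P_{Z,Y},\mathcal{F}).$$
   Context: Setting. $\mathcal{X}$ is an instance space, $\mathcal{Y}$ a fine-grained label space, $\mathcal{W}$ a coarse-grained (set-level) label space, $\mathcal{Z}$ a latent space. $\mathcal{S}$ is the space of finite sets $\{x_1,\dots,x_a\}$ of instances in $\mathcal{X}$, and $\mathcal{M}$ the space of finite sets of elements of $\mathcal{Z}$. There is a joint distribution of $(X,Y,S,W)$ with $X\in S$, whose marginals are $P_{X,Y}$ and $P_{S,W}$. $\mathcal{E}$ is a class of feature maps $e:\mathcal{X}\to\mathcal{Z}$; $\phi^e:\mathcal{S}\to\mathcal{M}$ sends $\{x_1,\dots,x_a\}$ to $\{e(x_1),\dots,e(x_a)\}$. $\mathcal{G}$ is a class of set-input functions $g:\mathcal{M}\to\mathcal{W}$; $\mathcal{F}$ a class of predictors $f:\mathcal{Z}\to\mathcal{Y}$. Losses $\ell^{\mathrm{fg}}:\mathcal{Y}\times\mathcal{Y}\to\mathbb{R}$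 and $\ell^{\mathrm{cg}}:\mathcal{W}\times\mathcal{W}\to\mathbb{R}$. For $e\in\mathcal{E}$, $g_e\in\arg\min_g\mathbb{E}_{P_{S,W}}\ell^{\mathrm{cg}}(g\circ\phi^e(S),W)$ and $\ell^{\mathrm{cg}}_e(s,w)=\ell^{\mathrm{cg}}(g_e\circ\phi^e(s),w)$. It is assumed there is $e_0\in\mathcal{E}$ with $g_{e_0}\circ\phi^{e_0}(S)=W$. $e^*\in\arg\min_{e\in\mathcal{E}}\mathbb{E}_{P_{S,W}}\ell^{\mathrm{cg}}_e(S,W)$, $f^*\in\arg\min_{f\in\mathcal{F}}\mathbb{E}_{P_{X,Y}}\ell^{\mathrm{fg}}(f\circ e^*(X),Y)$. $\hat P_{Z,Y}$ is the law of $(\hat e(X),Y)$. Rates. $\mathrm{Rate}_m(\ell^{\mathrm{cg}},P_{S,W},\mathcal{E})$ (for a confidence level $\delta$) bounds $\mathbb{E}_{P_{S,W}}\ell^{\mathrm{cg}}_{\hat e}(S,W)$ with probability at least $1-\delta$ for the output $\hat e$ of the pretraining algorithm $\mathcal{A}_m$ run on $m$ i.i.d. samples of $P_{S,W}$. $\mathrm{Rate}_n(\ell^{\mathrm{fg}},Q_{Z,Y},\mathcal{F})$ bounds, with probability at least $1-\delta$, the excess risk $\mathbb{E}_{Q_{Z,Y}}[\ell^{\mathrm{fg}}(\hat f(Z),Y)-\ell^{\mathrm{fg}}(f^*(Z),Y)]$ of the output $\hat f$ of $\mathcal{A}_n$ run on $n$ i.i.d. samples of $Q_{Z,Y}$.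 Relative Lipschitzness. $f$ is $L$-Lipschitz relative to $\mathcal{E}$ if for all $s\in\mathcal{S}$, $x\in s$, $y\in\mathcal{Y}$, $e,e'\in\mathcal{E}$: $|\ell^{\mathrm{fg}}(f\circ e(x),y)-\ell^{\mathrm{fg}}(f\circ e'(x),y)|\le L\,\ell^{\mathrm{cg}}(g_e\circ\phi^e(s),g_{e'}\circ\phi^{e'}(s))$. *)

From HB Require Import structures.
From mathcomp Require Import all_boot all_order all_algebra.
From mathcomp Require Import all_classical all_reals all_analysis.
Set Implicit Arguments. Unset Strict Implicit. Unset Printing Implicit Defensive.
Import Order.TTheory GRing.Theory Num.Theory.
Local Open Scope classical_set_scope.
Local Open Scope ring_scope.

Definition phi {X Z : Type} (e : X -> Z) (s : set X) : set Z := e @` s.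

Section Defs.
Context {R : realType} {d : measure_display} {T : measurableType d}
  (P : probability T R) {X Z Y Wt : Type}.

Definition cg_risk (Sr : T -> set X) (Wr : T -> Wt) (lcg : Wt -> Wt -> R)
  (g : set Z -> Wt) (e : X -> Z) : \bar R :=
  (\int[P]_t (lcg (g (phi e (Sr t))) (Wr t))%:E)%E.

(* E_{P_{X,Y}} l^fg (f o e (X), Y)  (= E_{Q_{Z,Y}} l^fg (f Z, Y) for Q the law of (e X, Y)) *)
Definition fg_risk (Xr : T -> X) (Yr : T -> Y) (lfg : Y -> Y -> R)
  (f : Z -> Y) (e : X -> Z) : \bar R :=
  (\int[P]_t (lfg (f (e (Xr t))) (Yr t))%:E)%E.
End Defs.

Definition rel_lipschitz {R : realType} {X Z Y Wt : Type}
  (lfg : Y -> Y -> R) (lcg : Wt -> Wt -> R) (ge : (X -> Z) -> set Z -> Wt)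
  (E : set (X -> Z)) (f : Z -> Y) (L : R) : Prop :=
  forall (s : set X), finite_set s -> forall x, s x -> forall (y : Y) (e e' : X -> Z),
    E e -> E e' ->
    `| lfg (f (e x)) y - lfg (f (e' x)) y | <= L * lcg (ge e (phi e s)) (ge e' (phi e' s)).

From HB Require Import structures.
From mathcomp Require Import all_boot all_order all_algebra.
From mathcomp Require Import all_classical all_reals all_analysis.
From mathcomp Require Import lra.
Import Order.TTheory GRing.Theory Num.Theory.
Local Open Scope classical_set_scope.
Local Open Scope ring_scope.

(* Split the excess risk of fhat o ehat over f* o e* into three terms: the
   fine-tuning excess risk of fhat over fQ on the law of (ehat X, Y), at most
   Rate_n; the gap between fQ and f* on that law, nonpositive because fQ
   minimises the risk; and the cost of replacing e* by ehat under f*.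
   Relative Lipschitzness followed by the triangle inequality through W bounds
   the last term pointwise by L (l^cg_ehat(S,W) + l^cg_e*(S,W)); integrating,
   and using that e* minimises the pretraining risk, gives at most 2 L Rate_m. *)

Section IntegrableReal.
Context {d : measure_display} {T : measurableType d} {R : realType}.
Context {mu : {measure set T -> \bar R}} {D : set T}.
Hypothesis mD : measurable D.

Lemma EFin_Rintegral (f : T -> R) : mu.-integrable D (EFin \o f) ->
  (\int[mu]_(x in D) f x)%:E = (\int[mu]_(x in D) (f x)%:E)%E.
Proof. by move=> intf; rewrite fineK// (integrable_fin_num mD intf). Qed.

Lemma integrableD_EFin (f g : T -> R) :
  mu.-integrable D (EFin \o f) -> mu.-integrable D (EFin \o g) ->
  mu.-integrable D (EFin \o (f \+ g)).
Proof.
move=> intf intg; apply: (eq_integrable mD _ _ _ (integrableD mD intf intg)) => x _.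
by rewrite /= EFinD.
Qed.

Lemma integrableB_EFin (f g : T -> R) :
  mu.-integrable D (EFin \o f) -> mu.-integrable D (EFin \o g) ->
  mu.-integrable D (EFin \o (f \- g)).
Proof.
move=> intf intg; apply: (eq_integrable mD _ _ _ (integrableB mD intf intg)) => x _.
by rewrite /= EFinB.
Qed.

Lemma integrableZl_EFin (k : R) (f : T -> R) :
  mu.-integrable D (EFin \o f) -> mu.-integrable D (EFin \o (fun x => k * f x)).
Proof.
move=> intf; apply: (eq_integrable mD _ _ _ (integrableZl mD k intf)) => x _.
by rewrite /= EFinM.
Qed.

End IntegrableReal.

Lemma le_sym_triangle {R : numDomainType} {W : Type} (dist : W -> W -> R) :
  (forall a b, dist a b = dist b a) ->
  (forall a b c, dist a c <= dist a b + dist b c) ->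
  forall a b w, dist a b <= dist a w + dist b w.
Proof. by move=> distC dist_tri a b w; rewrite [dist b w]distC. Qed.

Section RelativeLipschitz.
Context {R : realType} {d : measure_display} {T : measurableType d}
  {mu : {measure set T -> \bar R}} {X Z Y Wt : Type}.
Context {Xr : T -> X} {Yr : T -> Y} {Sr : T -> set X} {Wr : T -> Wt}.
Context {lfg : Y -> Y -> R} {lcg : Wt -> Wt -> R}.
Context {E : set (X -> Z)} {ge : (X -> Z) -> set Z -> Wt}.
Hypothesis Sr_finite_mem : forall t, finite_set (Sr t) /\ Sr t (Xr t).
Hypothesis lcgC : forall a b, lcg a b = lcg b a.
Hypothesis lcg_triangle : forall a b c, lcg a c <= lcg a b + lcg b c.

Lemma rel_lipschitz_le_cg_loss (f : Z -> Y) (L : R) (e e' : X -> Z) t :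
  0 <= L -> rel_lipschitz lfg lcg ge E f L -> E e -> E e' ->
  lfg (f (e (Xr t))) (Yr t) - lfg (f (e' (Xr t))) (Yr t) <=
  L * (lcg (ge e (phi e (Sr t))) (Wr t) + lcg (ge e' (phi e' (Sr t))) (Wr t)).
Proof.
move=> L0 lip Ee Ee'; have [Sr_fin Sr_Xr] := Sr_finite_mem t.
apply: le_trans (ler_norm _) _.
apply: le_trans (lip _ Sr_fin _ Sr_Xr (Yr t) _ _ Ee Ee') _.
by rewrite ler_wpM2l// le_sym_triangle.
Qed.

Lemma fg_risk_shift_le {f : Z -> Y} {L : R} {e e' : X -> Z} :
  0 <= L -> rel_lipschitz lfg lcg ge E f L -> E e -> E e' ->
  mu.-integrable setT (fun t => (lfg (f (e (Xr t))) (Yr t))%:E) ->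
  mu.-integrable setT (fun t => (lfg (f (e' (Xr t))) (Yr t))%:E) ->
  mu.-integrable setT (fun t => (lcg (ge e (phi e (Sr t))) (Wr t))%:E) ->
  mu.-integrable setT (fun t => (lcg (ge e' (phi e' (Sr t))) (Wr t))%:E) ->
  \int[mu]_t lfg (f (e (Xr t))) (Yr t) - \int[mu]_t lfg (f (e' (Xr t))) (Yr t) <=
  L * (\int[mu]_t lcg (ge e (phi e (Sr t))) (Wr t) +
       \int[mu]_t lcg (ge e' (phi e' (Sr t))) (Wr t)).
Proof.
move=> L0 lip Ee Ee' ife ife' ice ice'.
have ic := integrableD_EFin measurableT _ _ ice ice'.
rewrite -RintegralB// -RintegralD// -RintegralZl//.
apply: le_Rintegral => //.
- exact: integrableB_EFin.
- exact: integrableZl_EFin.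
- by move=> t _; exact: rel_lipschitz_le_cg_loss.
Qed.

End RelativeLipschitz.

Theorem proposition1 (R : realType) (d : measure_display) (T : measurableType d)
  (P : probability T R) (X Z Y Wt : Type)
  (Xr : T -> X) (Yr : T -> Y) (Sr : T -> set X) (Wr : T -> Wt)
  (lfg : Y -> Y -> R) (lcg : Wt -> Wt -> R)
  (E : set (X -> Z)) (G : set (set Z -> Wt)) (F : set (Z -> Y))
  (ge : (X -> Z) -> set Z -> Wt)
  (estar ehat : X -> Z) (fstar fhat fQ : Z -> Y) (L Rate_m Rate_n : R) :
  (* the joint law of (X,Y,S,W): S is a finite set containing X *)
  (forall t, finite_set (Sr t) /\ Sr t (Xr t)) ->
  (* l^cg is symmetric and satisfies the triangle inequality *)
  (forall a b, lcg a b = lcg b a) ->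
  (forall a b c, lcg a c <= lcg a b + lcg b c) ->
  (* integrability of the losses involved *)
  (forall e f, E e -> F f ->
     P.-integrable setT (fun t => (lfg (f (e (Xr t))) (Yr t))%:E)) ->
  (forall e, E e ->
     P.-integrable setT (fun t => (lcg (ge e (phi e (Sr t))) (Wr t))%:E)) ->
  (forall e e', E e -> E e' ->
     P.-integrable setT
       (fun t => (lcg (ge e (phi e (Sr t))) (ge e' (phi e' (Sr t))))%:E)) ->
  (* g_e in argmin_{g in G} E l^cg (g o phi^e (S), W) *)
  (forall e, E e -> G (ge e) /\
     forall g, G g -> (cg_risk P Sr Wr lcg (ge e) e <= cg_risk P Sr Wr lcg g e)%E) ->
  (* realizability: some e0 in E with g_{e0} o phi^{e0} (S) = W *)
  (exists2 e0, E e0 & forall t, ge e0 (phi e0 (Sr t)) = Wr t) ->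
  (* e* in argmin_{e in E} E l^cg_e (S, W) *)
  E estar ->
  (forall e, E e -> (cg_risk P Sr Wr lcg (ge estar) estar <= cg_risk P Sr Wr lcg (ge e) e)%E) ->
  (* f* in argmin_{f in F} E l^fg (f o e* (X), Y) *)
  F fstar ->
  (forall f, F f -> (fg_risk P Xr Yr lfg fstar estar <= fg_risk P Xr Yr lfg f estar)%E) ->
  (* f* is L-Lipschitz relative to E, with a Lipschitz constant L >= 0 *)
  0 <= L ->
  rel_lipschitz lfg lcg ge E fstar L ->
  (* outputs of the algorithms *)
  E ehat -> F fhat ->
  (* pretraining rate: E l^cg_{ehat}(S,W) <= Rate_m *)
  (cg_risk P Sr Wr lcg (ge ehat) ehat <= Rate_m%:E)%E ->
  (* fine-tuning rate: excess risk of fhat on hat P_{Z,Y} (law of (ehat X, Y)),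
     relative to a risk minimiser fQ over F, is at most Rate_n *)
  F fQ ->
  (forall f, F f -> (fg_risk P Xr Yr lfg fQ ehat <= fg_risk P Xr Yr lfg f ehat)%E) ->
  (\int[P]_t ((lfg (fhat (ehat (Xr t))) (Yr t) - lfg (fQ (ehat (Xr t))) (Yr t))%:E)
     <= Rate_n%:E)%E ->
  (* conclusion *)
  (\int[P]_t ((lfg (fhat (ehat (Xr t))) (Yr t) - lfg (fstar (estar (Xr t))) (Yr t))%:E)
     <= (2 * L * Rate_m + Rate_n)%:E)%E.
Proof.
move=> Sr_fin lcgC lcg_tri int_fg int_cg _ _ _ Estar estar_min Fstar _ L0 lip
  Ehat Fhat ehat_rate FQ fQ_min fhat_rate.
have [int_hat_hat int_Q_hat] := (int_fg _ _ Ehat Fhat, int_fg _ _ Ehat FQ).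
have [int_star_hat int_star_star] := (int_fg _ _ Ehat Fstar, int_fg _ _ Estar Fstar).
have [int_cg_hat int_cg_star] := (int_cg _ Ehat, int_cg _ Estar).
move: fhat_rate (fQ_min _ Fstar) ehat_rate (estar_min _ Ehat).
rewrite /fg_risk /cg_risk -!EFin_Rintegral ?lee_fin //;
  [|exact: integrableB_EFin..].
rewrite !RintegralB // => fine_tune fQ_opt pretrain estar_opt.
have := fg_risk_shift_le Sr_fin lcgC lcg_tri L0 lip Ehat Estar
  int_star_hat int_star_star int_cg_hat int_cg_star.
have : L * (\int[P]_t lcg (ge ehat (phi ehat (Sr t))) (Wr t) +
            \int[P]_t lcg (ge estar (phi estar (Sr t))) (Wr t)) <= L * (2 * Rate_m).
  by rewrite ler_wpM2l //; lra.
lra.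
Qed.
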